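(* Let $n\ge3$, let $(f,\Gamma)$ satisfy the standing structural assumptions, let $R>0$ and $x_0\in\mathbb R^n$. Then $u^{(in)}_{R,x_0}$ is the unique continuous viscosity solution of $f(\lambda(-A^u))=1$, $u>0$ in $B_R(x_0)$, with $u(x)\to+\infty$ as $\mathrm{dist}(x,\partial B_R(x_0))\to0$.
   Context: Let $n\ge3$. For a positive $C^2$ function $u$, its conformal Hessian is $A^u=-\frac{2}{n-2}u^{-\frac{n+2}{n-2}}\nabla^2u+\frac{2n}{(n-2)^2}u^{-\frac{2n}{n-2}}\nabla u\otimes\nabla u-\frac{2}{(n-2)^2}u^{-\frac{2n}{n-2}}|\nabla u|^2I$, and $\lambda(-A^u)$ is the vector of eigenvalues of $-A^u$. Let $\Gamma_n=\{\mu:\mu_i>0\ \forall i\}$. Standing structural assumptions on $(f,\Gamma)$: $\Gamma\subset\mathbb R^n$ is an open symmetric cone with vertex at the origin, $\Gamma+\Gamma_n\subset\Gamma$; $f\in C^0(\bar\Gamma)$ symmetric, $f>0$ in $\Gamma$, $f=0$ on $\partial\Gamma$, $f(\lambda+\mu)\ge f(\lambda)$ for $\lambda\in\Gamma,\mu\in\Gamma_n$, $f$ homogeneous of some positive degree. Viscosity solutions: sub-solutions $u\in USC$ satisfy $f(\lambda(-A^\varphi(x_0)))\ge1$ for every $C^2$ $\varphi$ touching $u$ from above at $x_0$; super-solutions $u\in LSC$ satisfy either $\lambda(-A^\varphi(x_0))\notin\bar\Gamma$ or $f(\lambda(-A^\varphi(x_0)))\le1$ for every $C^2$ $\varphi$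 touching from below; solutions are continuous functions that are both. Canonical solutions: there is a unique constant $\alpha=\alpha(f)>0$ such that for all $R>0$, $x_0\in\mathbb R^n$ the functions $u^{(in)}_{R,x_0}(x)=\alpha\big(\frac{R}{R^2-|x-x_0|^2}\big)^{\frac{n-2}{2}}$ and $u^{(out)}_{R,x_0}(x)=\alpha\big(\frac{R}{|x-x_0|^2-R^2}\big)^{\frac{n-2}{2}}$ satisfy $f(\lambda(-A^{u}))=1$ in $B_R(x_0)$ and in $\mathbb R^n\setminus\bar B_R(x_0)$ respectively (the eigenvalue vectors being constant). *)

From mathcomp Require Import all_boot.
From Stdlib Require Import Reals.
Set Implicit Arguments. Unset Strict Implicit.
Open Scope R_scope.

Definition Vec (n : nat) := 'I_n -> R.

Definition vadd {n} (x y : Vec n) : Vec n := fun i => x i + y i.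
Definition vsub {n} (x y : Vec n) : Vec n := fun i => x i - y i.
Definition vscale {n} (t : R) (x : Vec n) : Vec n := fun i => t * x i.
Definition vconst n (c : R) : Vec n := fun _ => c.
Definition kdelta {n} (i j : 'I_n) : R := if i == j then 1 else 0.
Definition ebasis {n} (i : 'I_n) : Vec n := fun j => kdelta i j.

Definition sumI n (F : 'I_n -> R) : R := \big[Rplus/0]_(i < n) F i.
Definition norm2 {n} (x : Vec n) : R := sumI (fun i => x i * x i).
Definition norm {n} (x : Vec n) : R := sqrt (norm2 x).

Definition ball {n} (x0 : Vec n) (r : R) : Vec n -> Prop :=
  fun x => norm (vsub x x0) < r.
Definition outside_cball {n} (x0 : Vec n) (r : R) : Vec n -> Prop :=
  fun x => r < norm (vsub x x0).

Definition cont_on {n} (U : Vec n -> Prop) (g : Vec n -> R) : Prop :=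
  forall x, U x -> forall eps, 0 < eps -> exists delta, 0 < delta /\
    forall y, U y -> norm (vsub y x) < delta -> Rabs (g y - g x) < eps.

Definition closure {n} (S : Vec n -> Prop) : Vec n -> Prop :=
  fun mu => forall eps, 0 < eps -> exists nu, S nu /\ norm (vsub nu mu) < eps.

Definition Gamma_n {n} : Vec n -> Prop := fun mu => forall i, 0 < mu i.

(** [Dg i x] is the i-th partial derivative, [D2g i j x] = d_j d_i g (x). *)
Definition C2_on {n} (U : Vec n -> Prop) (g : Vec n -> R)
  (Dg : 'I_n -> Vec n -> R) (D2g : 'I_n -> 'I_n -> Vec n -> R) : Prop :=
  (forall x, U x -> forall i,
      derivable_pt_lim (fun t => g (vadd x (vscale t (ebasis i)))) 0 (Dg i x)) /\
  (forall x, U x -> forall i j,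
      derivable_pt_lim (fun t => Dg i (vadd x (vscale t (ebasis j)))) 0 (D2g i j x)) /\
  cont_on U g /\ (forall i, cont_on U (Dg i)) /\ (forall i j, cont_on U (D2g i j)).

Definition conf_hess n (g : Vec n -> R) (Dg : 'I_n -> Vec n -> R)
  (D2g : 'I_n -> 'I_n -> Vec n -> R) (x : Vec n) : 'I_n -> 'I_n -> R :=
  let N := INR n in
  fun i j =>
    - (2 / (N - 2)) * Rpower (g x) (- ((N + 2) / (N - 2))) * D2g i j x
    + (2 * N / ((N - 2) * (N - 2))) * Rpower (g x) (- (2 * N / (N - 2)))
        * (Dg i x * Dg j x)
    - (2 / ((N - 2) * (N - 2))) * Rpower (g x) (- (2 * N / (N - 2)))
        * sumI (fun k => Dg k x * Dg k x) * kdelta i j.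

(** mu is a vector of eigenvalues of the (symmetric) matrix M:
    Q^T M Q = diag(mu) for some orthogonal Q. *)
Definition eigvals n (M : 'I_n -> 'I_n -> R) (mu : Vec n) : Prop :=
  exists Q : 'I_n -> 'I_n -> R,
    (forall i j, sumI (fun k => Q k i * Q k j) = kdelta i j) /\
    (forall i j, sumI (fun k => sumI (fun l => Q k i * M k l * Q l j))
                 = kdelta i j * mu i).

Definition neg_mx n (M : 'I_n -> 'I_n -> R) : 'I_n -> 'I_n -> R :=
  fun i j => - M i j.

Record structural n (Gam : Vec n -> Prop) (f : Vec n -> R) : Prop := {
  Gam_open : forall mu, Gam mu -> exists eps, 0 < eps /\
      forall nu, norm (vsub nu mu) < eps -> Gam nu;
  Gam_sym : forall (s : 'I_n -> 'I_n) mu, bijective s -> Gam mu ->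
      Gam (fun i => mu (s i));
  Gam_cone : forall mu t, Gam mu -> 0 < t -> Gam (vscale t mu);
  Gam_add : forall mu nu, Gam mu -> Gamma_n nu -> Gam (vadd mu nu);
  f_cont : cont_on (closure Gam) f;
  f_sym : forall (s : 'I_n -> 'I_n) mu, bijective s -> closure Gam mu ->
      f (fun i => mu (s i)) = f mu;
  f_pos : forall mu, Gam mu -> 0 < f mu;
  f_bdry : forall mu, closure Gam mu -> ~ Gam mu -> f mu = 0;
  f_mono : forall mu nu, Gam mu -> Gamma_n nu -> f mu <= f (vadd mu nu);
  f_homog : exists p, 0 < p /\ forall mu t, closure Gam mu -> 0 < t ->
      f (vscale t mu) = Rpower t p * f mu
}.

Definition visc_sub n (Gam : Vec n -> Prop) (f : Vec n -> R)
  (Om : Vec n -> Prop) (u : Vec n -> R) : Prop :=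
  forall x0 r phi Dphi D2phi, Om x0 -> 0 < r ->
    (forall y, ball x0 r y -> Om y) ->
    C2_on (ball x0 r) phi Dphi D2phi ->
    phi x0 = u x0 -> (forall y, ball x0 r y -> u y <= phi y) ->
    forall mu, eigvals (neg_mx (conf_hess phi Dphi D2phi x0)) mu ->
      closure Gam mu /\ 1 <= f mu.

Definition visc_super n (Gam : Vec n -> Prop) (f : Vec n -> R)
  (Om : Vec n -> Prop) (u : Vec n -> R) : Prop :=
  forall x0 r phi Dphi D2phi, Om x0 -> 0 < r ->
    (forall y, ball x0 r y -> Om y) ->
    C2_on (ball x0 r) phi Dphi D2phi ->
    phi x0 = u x0 -> (forall y, ball x0 r y -> phi y <= u y) ->
    forall mu, eigvals (neg_mx (conf_hess phi Dphi D2phi x0)) mu ->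
      ~ closure Gam mu \/ f mu <= 1.

Definition visc_solution n (Gam : Vec n -> Prop) (f : Vec n -> R)
  (Om : Vec n -> Prop) (u : Vec n -> R) : Prop :=
  cont_on Om u /\ visc_sub Gam f Om u /\ visc_super Gam f Om u.

Definition classical_solution n (Gam : Vec n -> Prop) (f : Vec n -> R)
  (Om : Vec n -> Prop) (u : Vec n -> R) : Prop :=
  (forall x, Om x -> 0 < u x) /\
  exists Du D2u, C2_on Om u Du D2u /\
    forall x, Om x -> forall mu, eigvals (neg_mx (conf_hess u Du D2u x)) mu ->
      closure Gam mu /\ f mu = 1.

Definition u_in n (alpha Rad : R) (x0 : Vec n) : Vec n -> R :=
  fun x => alpha * Rpower (Rad / (Rad * Rad - norm2 (vsub x x0))) ((INR n - 2) / 2).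
Definition u_out n (alpha Rad : R) (x0 : Vec n) : Vec n -> R :=
  fun x => alpha * Rpower (Rad / (norm2 (vsub x x0) - Rad * Rad)) ((INR n - 2) / 2).

(** u(x) -> +infinity as dist(x, dB_R(x0)) = R - |x - x0| -> 0, x in B_R(x0). *)
Definition blows_up_at_bdry n (x0 : Vec n) (Rad : R) (u : Vec n -> R) : Prop :=
  forall M, exists delta, 0 < delta /\
    forall x, ball x0 Rad x -> Rad - norm (vsub x x0) < delta -> M < u x.

(* -A^{u_in} is the constant multiple c I of the identity, with c = 2 alpha^(-4/(n-2)), and
   scaling a function by t > 0 multiplies its conformal Hessian by t^(-4/(n-2)).  A C^2 function
   touching u_in from above (below) has the same gradient and a larger (smaller) Hessian at the
   contact point, so the eigenvalues of its -A are >= c (<= c); monotonicity and homogeneity of f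
   then give f >= 1 (f <= 1), i.e. u_in is a viscosity solution.

   For uniqueness, let u be a solution blowing up at the boundary.  For r < R the canonical
   solution of radius r blows up on the sphere of radius r, where u stays bounded, so the ratio
   of u to it attains an interior maximum t.  If t > 1, then t u_in touches u from above, and the
   eigenvalues t^(-4/(n-2)) c of its -A give f < 1, against the sub-solution property; hence u is
   below the canonical solution of radius r.  Symmetrically, u blows up on the sphere of radius R
   where the canonical solution of radius R' > R is bounded, and the super-solution property puts
   u above it.  Letting r and R' tend to R gives u = u_in. *)

From HB Require Import structures.
From Pilot Require Import Defs.
From mathcomp Require Import all_boot.
From Stdlib Require Import Reals Lra FunctionalExtensionality Classical.
From mathcomp Require all_order all_algebra all_classical all_reals all_analysis.
From mathcomp Require Rstruct Rstruct_topology.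
From Coquelicot Require Coquelicot.
Open Scope R_scope.
Set Implicit Arguments. Unset Strict Implicit.

Lemma Rplus_assoc_ssr : associative Rplus. Proof. by move=> *; ring. Qed.
HB.instance Definition _ :=
  Monoid.isComLaw.Build R 0 Rplus Rplus_assoc_ssr Rplus_comm Rplus_0_l.

Ltac neq0 := apply: Rlt_dichotomy_converse; first [right; lra | left; lra | right; nra].

Section FiniteSums.
Variable n : nat.
Implicit Types F G : 'I_n -> R.

Lemma sumI_ext F G : (forall i, F i = G i) -> sumI F = sumI G.
Proof. by move=> H; apply: eq_bigr => i _. Qed.

Lemma sumI_add F G : sumI (fun i => F i + G i) = sumI F + sumI G.
Proof. exact: big_split. Qed.

Lemma sumI_scal c F : sumI (fun i => c * F i) = c * sumI F.
Proof. by rewrite /sumI; elim/big_rec2: _ => [|i y1 y2 _ ->]; ring. Qed.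

Lemma sumI_0 : sumI (fun _ : 'I_n => 0) = 0.
Proof. exact: big1. Qed.

Lemma sumI_const c : sumI (fun _ : 'I_n => c) = INR n * c.
Proof.
rewrite /sumI big_const_ord; elim: n => [|m IH] /=; first ring.
by rewrite IH; case: m {IH} => [|m] /=; ring.
Qed.

Lemma sumI_le F G : (forall i, F i <= G i) -> sumI F <= sumI G.
Proof.
move=> H; rewrite /sumI; elim/big_rec2: _ => [|i y1 y2 _ Hy]; first lra.
by have := H i; lra.
Qed.

Lemma sumI_ge0 F : (forall i, 0 <= F i) -> 0 <= sumI F.
Proof. by move=> H; rewrite -sumI_0; apply: sumI_le. Qed.

Lemma sumI_D1 F i : sumI F = F i + sumI (fun k => if k == i then 0 else F k).
Proof.
rewrite /sumI (bigD1 i) //= [in RHS](bigD1 i) //= eqxx Rplus_0_l.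
by congr (_ + _); apply: eq_bigr => k /negbTE ->.
Qed.

Lemma kdelta_sym (i j : 'I_n) : kdelta i j = kdelta j i.
Proof. by rewrite /kdelta eq_sym. Qed.

Lemma kdelta_ii (i : 'I_n) : kdelta i i = 1.
Proof. by rewrite /kdelta eqxx. Qed.

Lemma sumI_kdelta_l F i : sumI (fun k => kdelta i k * F k) = F i.
Proof.
rewrite (sumI_D1 _ i) kdelta_ii (@sumI_ext _ (fun _ => 0)) ?sumI_0; first ring.
move=> k; rewrite /kdelta; case: (boolP (k == i)) => Hk /=; first ring.
by rewrite eq_sym (negbTE Hk); ring.
Qed.

Lemma sumI_kdelta_r F i : sumI (fun k => F k * kdelta k i) = F i.
Proof.
by rewrite -(sumI_kdelta_l F i); apply: sumI_ext => k; rewrite kdelta_sym; ring.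
Qed.

End FiniteSums.

Section EuclideanNorm.
Variable n : nat.
Implicit Types x y z : Vec n.

Definition dot x y := sumI (fun i => x i * y i).

Lemma norm2_ge0 x : 0 <= norm2 x.
Proof. by apply: sumI_ge0 => i; nra. Qed.

Lemma norm_ge0 x : 0 <= norm x.
Proof. exact: sqrt_pos. Qed.

Lemma norm_sq x : norm x * norm x = norm2 x.
Proof. exact/sqrt_sqrt/norm2_ge0. Qed.

Lemma coord_le_norm2 x i : x i * x i <= norm2 x.
Proof.
rewrite /norm2 (sumI_D1 _ i).
suff : 0 <= sumI (fun k => if k == i then 0 else x k * x k) by lra.
by apply: sumI_ge0 => k; case: (k == i); nra.
Qed.

Lemma coord_le_norm x i : Rabs (x i) <= norm x.
Proof. by rewrite -sqrt_Rsqr_abs; apply/sqrt_le_1_alt/coord_le_norm2. Qed.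

Lemma norm_le_sumabs x : norm x <= sumI (fun i => Rabs (x i)).
Proof.
have Hs : 0 <= sumI (fun i => Rabs (x i)) by apply: sumI_ge0 => i; apply: Rabs_pos.
apply: Rsqr_incr_0 => //; last exact: norm_ge0.
rewrite /Rsqr norm_sq /norm2 /sumI.
suff [] : \big[Rplus/0]_(i < n) (x i * x i) <=
    (\big[Rplus/0]_(i < n) Rabs (x i)) * (\big[Rplus/0]_(i < n) Rabs (x i)) /\
  0 <= \big[Rplus/0]_(i < n) Rabs (x i) by [].
elim/big_rec2: _ => [|i y1 y2 _ [Hy Hy2]]; first lra.
have := Rabs_pos (x i); have := Rsqr_abs (x i); rewrite /Rsqr; split; nra.
Qed.

Lemma norm2_add x y : norm2 (vadd x y) = norm2 x + 2 * dot x y + norm2 y.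
Proof. by rewrite /norm2 /dot -sumI_scal -!sumI_add; apply: sumI_ext => i; rewrite /vadd; ring. Qed.

Lemma norm2_scale t x : norm2 (vscale t x) = t * t * norm2 x.
Proof. by rewrite /norm2 -sumI_scal; apply: sumI_ext => i; rewrite /vscale; ring. Qed.

Lemma cauchy_schwarz x y : dot x y * dot x y <= norm2 x * norm2 y.
Proof.
have [Hx|Hx] := Rle_lt_or_eq_dec _ _ (norm2_ge0 x); last first.
  rewrite /dot (@sumI_ext _ _ (fun _ => 0)) ?sumI_0 -?Hx; first lra.
  move=> i; have := coord_le_norm2 x i; rewrite -Hx => h.
  have Hxi : x i = 0 by nra.
  by rewrite Hxi; ring.
have := norm2_ge0 (vadd y (vscale (- (dot x y / norm2 x)) x)).
rewrite norm2_add norm2_scale.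
have -> : dot y (vscale (- (dot x y / norm2 x)) x) = - (dot x y / norm2 x) * dot x y.
  by rewrite /dot -sumI_scal; apply: sumI_ext => i; rewrite /vscale; ring.
have -> : norm2 y + 2 * (- (dot x y / norm2 x) * dot x y) +
    - (dot x y / norm2 x) * - (dot x y / norm2 x) * norm2 x =
  (norm2 x * norm2 y - dot x y * dot x y) / norm2 x by field; neq0.
move=> h; have := Rmult_le_compat_r (norm2 x) _ _ (Rlt_le _ _ Hx) h.
by rewrite Rmult_0_l /Rdiv Rmult_assoc Rinv_l ?Rmult_1_r; [lra|neq0].
Qed.

Lemma norm_triang x y : norm (vadd x y) <= norm x + norm y.
Proof.
have Hx := norm_ge0 x; have Hy := norm_ge0 y.
have Hdot : dot x y <= norm x * norm y.
  have := cauchy_schwarz x y; rewrite -(norm_sq x) -(norm_sq y).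
  case: (Rle_dec (dot x y) 0) => h; first nra.
  by move=> H; apply: Rsqr_incr_0; rewrite ?Rsqr_mult /Rsqr; nra.
apply: Rsqr_incr_0; [|exact: norm_ge0|lra].
by rewrite /Rsqr norm_sq norm2_add -(norm_sq x) -(norm_sq y); nra.
Qed.

Lemma norm_triang_sub x y z : norm (vsub x z) <= norm (vsub x y) + norm (vsub y z).
Proof.
have -> : vsub x z = vadd (vsub x y) (vsub y z).
  by apply: functional_extensionality => i; rewrite /vsub /vadd; ring.
exact: norm_triang.
Qed.

Lemma norm_sym x y : norm (vsub x y) = norm (vsub y x).
Proof. by rewrite /norm /norm2; congr sqrt; apply: sumI_ext => i; rewrite /vsub; ring. Qed.

Lemma norm_self x : norm (vsub x x) = 0.
Proof.
rewrite /norm /norm2 (@sumI_ext _ _ (fun _ => 0)) ?sumI_0 ?sqrt_0 //.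
by move=> i; rewrite /vsub; ring.
Qed.

Lemma norm_scale t x : norm (vscale t x) = Rabs t * norm x.
Proof.
rewrite /norm norm2_scale sqrt_mult ?sqrt_Rsqr_abs //; [nra|exact: norm2_ge0].
Qed.

Lemma norm_ebasis (j : 'I_n) : norm (ebasis j) = 1.
Proof.
rewrite /norm /norm2 (@sumI_ext _ _ (fun k => kdelta j k * 1)) ?sumI_kdelta_l ?sqrt_1 //.
by move=> k; rewrite /ebasis /kdelta; case: (j == k); ring.
Qed.

Lemma norm_line x c j t : norm (vsub (vadd x (vscale t (ebasis j))) c) <= norm (vsub x c) + Rabs t.
Proof.
have -> : vsub (vadd x (vscale t (ebasis j))) c = vadd (vsub x c) (vscale t (ebasis j)).
  by apply: functional_extensionality => k; rewrite /vsub /vadd; ring.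
by apply: Rle_trans (norm_triang _ _) _; rewrite norm_scale norm_ebasis; lra.
Qed.

Lemma ball_center x r : 0 < r -> ball x r x.
Proof. by rewrite /ball norm_self. Qed.

Lemma ball_sub_ball x0 x r :
  ball x0 r x -> forall y, ball x (r - norm (vsub x x0)) y -> ball x0 r y.
Proof. by rewrite /ball => H y Hy; have := norm_triang_sub y x x0; lra. Qed.

Lemma norm2_lt_ball x c r : 0 < r -> ball c r x -> norm2 (vsub x c) < r * r.
Proof. by rewrite /ball -norm_sq => r0 H; have := norm_ge0 (vsub x c); nra. Qed.

End EuclideanNorm.

Module CompactBall.
Import all_order all_algebra all_classical all_reals all_analysis Rstruct Rstruct_topology.
Import Order.TTheory GRing.Theory Num.Theory Num.Def.
Local Open Scope classical_set_scope.
Local Open Scope ring_scope.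

(* Vec n is transported to the normed space 'rV[R]_n, whose norm is the max norm. *)
Definition toV n (v : 'rV[R]_n) : Vec n := fun i => v ord0 i.

Lemma toV_row n (c : Vec n) : toV (\row_i c i) = c.
Proof. by apply: functional_extensionality => i; rewrite /toV mxE. Qed.

Lemma coord_le_mx_norm n (v : 'rV[R]_n) i : `|v ord0 i| <= `|v|.
Proof.
rewrite [leRHS]/normr /= mx_normrE.
by apply/bigmax_geP; right => /=; exists (ord0, i).
Qed.

Lemma norm_toV_le n (v w : 'rV[R]_n) (d : R) : ball v d w ->
  Rle (Defs.norm (vsub (toV w) (toV v))) (Rmult (INR n) d).
Proof.
rewrite mx_norm_ball /ball_ => H; apply: (Rle_trans _ _ _ (norm_le_sumabs _)).
rewrite -sumI_const; apply: sumI_le => i; apply/Rlt_le/RltP.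
rewrite /vsub /toV RabsE RminusE distrC; apply: le_lt_trans H.
by have := coord_le_mx_norm (v - w) i; rewrite !mxE.
Qed.

Section ClosedBall.
Variables (n : nat) (c : Vec n) (rho : R).

Definition cball_rV := [set v : 'rV[R]_n | Rle (Defs.norm (vsub (toV v) c)) rho].

Lemma cball_rV_closed : closed cball_rV.
Proof.
have Hn1 : Rlt 0 (Rplus (INR n) 1) by have := pos_INR n; lra.
move=> v Hv; rewrite /cball_rV /=; apply: Rnot_lt_le => Hlt.
pose eta := Rdiv (Rminus (Defs.norm (vsub (toV v) c)) rho) (Rplus (INR n) 1).
have /RltP eta0 : Rlt 0 eta by apply: Rdiv_lt_0_compat => //; lra.
have [w [Aw Bw]] := Hv _ (nbhsx_ballx v _ eta0).
have := norm_toV_le Bw; rewrite norm_sym /cball_rV /= in Aw *.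
have := norm_triang_sub (toV v) (toV w) c.
have : Rlt (Rmult (INR n) eta) (Rminus (Defs.norm (vsub (toV v) c)) rho).
  have -> : Rmult (INR n) eta = Rminus (Rminus (Defs.norm (vsub (toV v) c)) rho) eta.
    by rewrite /eta; field; neq0.
  by move/RltP: eta0; lra.
lra.
Qed.

Lemma cball_rV_bounded : bounded_set cball_rV.
Proof.
exists (Rplus rho (Defs.norm c)); split; first exact: num_real.
move=> M HM v Av; apply/ltW/le_lt_trans/HM.
rewrite [leLHS]/normr /= mx_normrE; apply/bigmax_leP; split.
  apply/RleP; have := norm_ge0 c; have := norm_ge0 (vsub (toV v) c).
  by move: Av; rewrite /cball_rV /= -?R0E; lra.
move=> [i j] _ /=; have -> : i = ord0 by apply/val_inj; rewrite /= (ord1 i).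
apply/RleP; rewrite -RabsE.
have h1 : Rle (Rabs (Rminus (v ord0 j) (c j))) (Defs.norm (vsub (toV v) c)).
  exact: (coord_le_norm (vsub (toV v) c) j).
have h2 := coord_le_norm c j.
have := Rabs_triang (Rminus (v ord0 j) (c j)) (c j).
have -> : Rplus (Rminus (v ord0 j) (c j)) (c j) = v ord0 j by ring.
move=> h3; apply: (Rle_trans _ _ _ h3); apply: Rplus_le_compat => //.
exact: Rle_trans h1 Av.
Qed.

End ClosedBall.

Lemma cball_argmax n (g : Vec n -> R) (c : Vec n) (rho : R) :
  Rle 0 rho -> cont_on (fun x => Rle (Defs.norm (vsub x c)) rho) g ->
  exists x, Rle (Defs.norm (vsub x c)) rho /\
    forall y, Rle (Defs.norm (vsub y c)) rho -> Rle (g y) (g x).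
Proof.
move=> rho0 Hg.
have Hn1 : Rlt 0 (Rplus (INR n) 1) by have := pos_INR n; lra.
have A0 : cball_rV c rho !=set0.
  by exists (\row_i c i); rewrite /cball_rV /= toV_row norm_self.
have cA := bounded_closed_compact (@cball_rV_bounded n c rho) (@cball_rV_closed n c rho).
have cF : {within cball_rV c rho, continuous (g \o @toV n)}.
  apply/subspace_continuousP => v Av.
  apply/(@cvgrPdist_lt _ R^o) => e /RltP e0.
  have [d [d0 Hd]] := Hg (toV v) Av e e0.
  have /RltP dd : Rlt 0 (Rdiv d (Rplus (INR n) 1)) by apply: Rdiv_lt_0_compat.
  rewrite near_withinE; apply/nbhs_ballP; exists (Rdiv d (Rplus (INR n) 1)) => //.
  move=> w Bw Aw; apply/RltP; rewrite -RabsE -RminusE /= Rabs_minus_sym.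
  apply: Hd => //; apply: Rle_lt_trans (norm_toV_le Bw) _.
  have -> : Rmult (INR n) (Rdiv d (Rplus (INR n) 1)) = Rminus d (Rdiv d (Rplus (INR n) 1)).
    by field; neq0.
  by move/RltP: dd; lra.
have [v Av Hmax] := EVT_max_rV A0 cA cF.
move: Av; rewrite in_setE => Av.
exists (toV v); split => // y Hy; apply/RleP.
by have := Hmax (\row_i y i); rewrite /= toV_row; apply; rewrite in_setE /cball_rV /= toV_row.
Qed.

End CompactBall.
Import CompactBall.

Lemma derivable_pt_lim_shift f c l :
  derivable_pt_lim (fun h => f (c + h)) 0 l -> derivable_pt_lim f c l.
Proof.
move=> H eps Heps; have [d Hd] := H eps Heps; exists d => h h0 hd.
by have := Hd h h0 hd; rewrite Rplus_0_l Rplus_0_r.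
Qed.

Lemma derivable_pt_lim_sumI n (F : 'I_n -> R -> R) (l : 'I_n -> R) x :
  (forall i, derivable_pt_lim (F i) x (l i)) ->
  derivable_pt_lim (fun t => sumI (fun i => F i t)) x (sumI l).
Proof.
move=> H; rewrite /sumI; elim: (index_enum _) => [|a s IH].
  under [fun t => _]functional_extensionality => t do rewrite big_nil.
  by rewrite big_nil; apply: derivable_pt_lim_const.
under [fun t => _]functional_extensionality => t do rewrite big_cons.
by rewrite big_cons; apply: derivable_pt_lim_plus (H a) IH.
Qed.

Lemma mvt_increment (h h' : R -> R) b L eps :
  (forall s, Rmin 0 b <= s <= Rmax 0 b -> derivable_pt_lim h s (h' s)) ->
  (forall s, Rmin 0 b <= s <= Rmax 0 b -> Rabs (h' s - L) <= eps) ->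
  Rabs (h b - h 0 - b * L) <= eps * Rabs b.
Proof.
move=> Hd Hb.
have [c [Hc ->]] := Derive.MVT_gen h 0 b h'
  (fun s Hs => proj2 (Derive.is_derive_Reals _ _ _)
     (Hd s (conj (Rlt_le _ _ (proj1 Hs)) (Rlt_le _ _ (proj2 Hs)))))
  (fun s Hs => derivable_continuous_pt _ _ (exist _ (h' s) (Hd s Hs))).
have -> : h' c * (b - 0) - b * L = b * (h' c - L) by ring.
by rewrite Rabs_mult Rmult_comm; apply: Rmult_le_compat_r (Rabs_pos _) (Hb c Hc).
Qed.

Lemma deriv2_neg_not_min (phi H : R -> R) rho Q : 0 < rho ->
  (forall t, Rabs t < rho -> derivable_pt_lim phi t (H t)) ->
  H 0 = 0 -> derivable_pt_lim H 0 Q -> Q < 0 ->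
  exists t, 0 < t < rho /\ phi t < phi 0.
Proof.
move=> rho0 Hphi H0 HH Q0.
have [d Hd] := HH (- Q / 2) ltac:(lra); have dp := cond_pos d.
have Hneg : forall s, 0 < s < d -> H s < 0.
  move=> s [s0 sd]; have := Hd s ltac:(lra) ltac:(rewrite Rabs_right; lra).
  rewrite Rplus_0_l H0 Rminus_0_r => h.
  have : H s / s < Q / 2 by split_Rabs; lra.
  have : H s = H s / s * s by field; lra.
  nra.
pose t := Rmin d rho / 2.
have [t0 tlt] : 0 < t < Rmin d rho by rewrite /t; have := Rmin_pos _ _ dp rho0; lra.
have [td trho] := (Rlt_le_trans _ _ _ tlt (Rmin_l _ _), Rlt_le_trans _ _ _ tlt (Rmin_r _ _)).
have [c [Heq Hc]] := MVT_cor2 phi H 0 t t0 (fun c Hc => Hphi c ltac:(rewrite Rabs_right; lra)).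
exists t; split; first lra.
by have := Hneg c ltac:(lra); nra.
Qed.

Lemma vadd_scale0 n (x v : Vec n) : vadd x (vscale 0 v) = x.
Proof. by apply: functional_extensionality => j; rewrite /vadd /vscale; ring. Qed.

Lemma vsub_line n (x v : Vec n) t : vsub (vadd x (vscale t v)) x = vscale t v.
Proof. by apply: functional_extensionality => j; rewrite /vsub /vadd; ring. Qed.

Lemma line_shift n (x v : Vec n) t h :
  vadd x (vscale (t + h) v) = vadd (vadd x (vscale t v)) (vscale h v).
Proof. by apply: functional_extensionality => j; rewrite /vadd /vscale; ring. Qed.

Section Directional.
Variables (n : nat) (g : Vec n -> R) (Dg : 'I_n -> Vec n -> R) (y v : Vec n) (r : R).
Hypothesis r0 : 0 < r.
Hypothesis Hpartial : forall z, ball y r z -> forall i,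
  derivable_pt_lim (fun t => g (vadd z (vscale t (ebasis i)))) 0 (Dg i z).
Hypothesis Hcont : forall i eps, 0 < eps -> exists d, 0 < d /\ forall z, ball y r z ->
  norm (vsub z y) < d -> Rabs (Dg i z - Dg i y) < eps.

Definition stair (m : nat) (t : R) : Vec n :=
  fun j => y j + (if (j < m)%nat then t * v j else 0).

Definition stair_slope (m : nat) := sumI (fun j => if (j < m)%nat then v j * Dg j y else 0).

Lemma stair_step (k : 'I_n) t :
  stair k.+1 t = vadd (stair k t) (vscale (t * v k) (ebasis k)).
Proof.
apply: functional_extensionality => j.
rewrite /stair /vadd /vscale /ebasis /kdelta ltnS leq_eqVlt.
case: (boolP (k == j)) => [/eqP <-|Hkj]; first by rewrite eqxx ltnn /=; ring.
have -> : (nat_of_ord j == k) = false.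
  by apply/negbTE; apply: contra Hkj => /eqP Hj; apply/eqP/val_inj.
by rewrite /=; ring.
Qed.

Lemma stair_slope_step (k : 'I_n) : stair_slope k.+1 = stair_slope k + v k * Dg k y.
Proof.
rewrite /stair_slope -(@sumI_kdelta_l _ (fun j => v j * Dg j y) k) -sumI_add.
apply: sumI_ext => j; rewrite /kdelta ltnS leq_eqVlt.
case: (boolP (k == j)) => [/eqP <-|Hkj]; first by rewrite eqxx ltnn /=; ring.
have -> : (nat_of_ord j == k) = false.
  by apply/negbTE; apply: contra Hkj => /eqP Hj; apply/eqP/val_inj.
by rewrite /=; ring.
Qed.

Lemma stair_step_dist (k : 'I_n) t s : Rabs s <= Rabs (t * v k) ->
  norm (vsub (vadd (stair k t) (vscale s (ebasis k))) y) <= Rabs t * sumI (fun j => Rabs (v j)).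
Proof.
move=> Hs; apply: Rle_trans (norm_le_sumabs _) _.
rewrite -sumI_scal; apply: sumI_le => j.
rewrite /vsub /vadd /stair /vscale /ebasis /kdelta.
have Ht := Rabs_pos t; have Hvj := Rabs_pos (v j).
case: (boolP (k == j)) => [/eqP <-|Hkj].
  rewrite ltnn Rabs_mult in Hs *.
  by have -> : y k + 0 + s * 1 - y k = s by ring.
case: (j < k)%nat.
  have -> : y j + t * v j + s * 0 - y j = t * v j by ring.
  by rewrite Rabs_mult; lra.
have -> : y j + 0 + s * 0 - y j = 0 by ring.
by rewrite Rabs_R0; nra.
Qed.

Lemma partial_on_segment p (k : 'I_n) s : ball y r (vadd p (vscale s (ebasis k))) ->
  derivable_pt_lim (fun u => g (vadd p (vscale u (ebasis k)))) s
    (Dg k (vadd p (vscale s (ebasis k)))).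
Proof.
move=> Hs; apply: derivable_pt_lim_shift.
by under [fun h => _]functional_extensionality => h do rewrite line_shift; apply: Hpartial.
Qed.

Lemma stair_step_increment (k : 'I_n) eps : 0 < eps ->
  exists d, 0 < d /\ forall t, Rabs t < d ->
    Rabs (g (stair k.+1 t) - g (stair k t) - t * v k * Dg k y) <= eps * Rabs t.
Proof.
move=> e0; pose S := sumI (fun j => Rabs (v j)).
have S0 : 0 <= S by apply: sumI_ge0 => j; apply: Rabs_pos.
have Hvk := Rabs_pos (v k).
pose eps' := eps / (Rabs (v k) + 1).
have e1 : 0 < eps' by apply: Rdiv_lt_0_compat; lra.
have [dc [dc0 Hc]] := Hcont k e1.
have m0 : 0 < Rmin dc r by apply: Rmin_pos.
exists (Rmin dc r / (S + 1)); split => [|t Ht]; first by apply: Rdiv_lt_0_compat; lra.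
have HtS : Rabs t * S < Rmin dc r.
  have := Rmult_lt_compat_r (S + 1) _ _ ltac:(lra) Ht.
  have -> : Rmin dc r / (S + 1) * (S + 1) = Rmin dc r by field; neq0.
  by have := Rabs_pos t; nra.
have Hnear : forall s, Rmin 0 (t * v k) <= s <= Rmax 0 (t * v k) ->
    ball y r (vadd (stair k t) (vscale s (ebasis k))) /\
    norm (vsub (vadd (stair k t) (vscale s (ebasis k))) y) < dc.
  move=> s Hs; have : Rabs s <= Rabs (t * v k).
    by move: Hs; rewrite /Rmin /Rmax; case: Rle_dec => Hb [H1 H2]; split_Rabs; lra.
  move/stair_step_dist; rewrite -/S /ball.
  by have := Rmin_l dc r; have := Rmin_r dc r; lra.
have := @mvt_increment (fun s => g (vadd (stair k t) (vscale s (ebasis k))))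
  (fun s => Dg k (vadd (stair k t) (vscale s (ebasis k)))) (t * v k) (Dg k y) eps'
  (fun s Hs => partial_on_segment (Hnear s Hs).1)
  (fun s Hs => Rlt_le _ _ (Hc _ (Hnear s Hs).1 (Hnear s Hs).2)).
rewrite /= vadd_scale0 -stair_step => H.
apply: Rle_trans H _; rewrite Rabs_mult.
have -> : eps = (Rabs (v k) + 1) * eps' by rewrite /eps'; field; neq0.
by have := Rabs_pos t; nra.
Qed.

Lemma stair_increment m : (m <= n)%nat -> forall eps, 0 < eps ->
  exists d, 0 < d /\ forall t, Rabs t < d ->
    Rabs (g (stair m t) - g y - t * stair_slope m) <= eps * Rabs t.
Proof.
elim: m => [|m IH] Hm eps e0.
  exists 1; split => [|t _]; first lra.
  rewrite /stair /stair_slope (@sumI_ext _ _ (fun _ => 0)) // sumI_0.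
  have -> : (fun j : 'I_n => y j + 0) = y by apply: functional_extensionality => j; ring.
  have -> : g y - g y - t * 0 = 0 by ring.
  by rewrite Rabs_R0; have := Rabs_pos t; nra.
pose k := Ordinal Hm; have Ek : m = k by []; rewrite Ek in IH *.
have [d1 [d10 H1]] := IH (ltnW Hm) (eps / 2) ltac:(lra).
have [d2 [d20 H2]] := stair_step_increment k (eps := eps / 2) ltac:(lra).
exists (Rmin d1 d2); split => [|t Ht]; first exact: Rmin_pos.
have := H1 t (Rlt_le_trans _ _ _ Ht (Rmin_l _ _)).
have := H2 t (Rlt_le_trans _ _ _ Ht (Rmin_r _ _)).
rewrite stair_slope_step.
have -> : g (stair k.+1 t) - g y - t * (stair_slope k + v k * Dg k y) =
  (g (stair k t) - g y - t * stair_slope k) +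
  (g (stair k.+1 t) - g (stair k t) - t * v k * Dg k y) by ring.
by have := Rabs_triang (g (stair k t) - g y - t * stair_slope k)
  (g (stair k.+1 t) - g (stair k t) - t * v k * Dg k y); lra.
Qed.

Lemma derivable_pt_lim_dir :
  derivable_pt_lim (fun t => g (vadd y (vscale t v))) 0 (sumI (fun i => v i * Dg i y)).
Proof.
have Hfull : forall t, stair n t = vadd y (vscale t v).
  by move=> t; apply: functional_extensionality => j; rewrite /stair ltn_ord.
have Hslope : stair_slope n = sumI (fun i => v i * Dg i y).
  by apply: sumI_ext => j; rewrite ltn_ord.
move=> eps e0.
have [d [d0 Hd]] := stair_increment (leqnn n) (eps := eps / 2) ltac:(lra).
exists (mkposreal d d0) => h h0 hd /=.
have := Hd h hd; rewrite Hfull Hslope Rplus_0_l vadd_scale0 => H.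
have hpos : 0 < Rabs h by apply: Rabs_pos_lt.
set S := sumI _ in H *; set G := g _ in H *.
have -> : (G - g y) / h - S = (G - g y - h * S) / h by field.
rewrite /Rdiv Rabs_mult Rabs_inv.
apply: (Rmult_lt_reg_r (Rabs h)) => //.
rewrite Rmult_assoc Rinv_l ?Rmult_1_r; [nra|neq0].
Qed.

End Directional.

Definition qform n (H : 'I_n -> 'I_n -> R) (v : Vec n) :=
  sumI (fun k => v k * sumI (fun l => v l * H k l)).

Lemma cont_on_ball_at n (U : Vec n -> R) x r y :
  cont_on (ball x r) U -> ball x r y ->
  forall eps, 0 < eps -> exists d, 0 < d /\ forall z, ball y (r - norm (vsub y x)) z ->
      norm (vsub z y) < d -> Rabs (U z - U y) < eps.
Proof.
move=> HU Hy eps e0; have [d [d0 Hd]] := HU y Hy eps e0.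
by exists d; split => // z Hz; apply: Hd; apply: ball_sub_ball Hz.
Qed.

Lemma local_min_partial0 n (psi : Vec n -> R) x r i l : 0 < r ->
  derivable_pt_lim (fun t => psi (vadd x (vscale t (ebasis i)))) 0 l ->
  (forall y, ball x r y -> psi x <= psi y) -> l = 0.
Proof.
move=> r0 Hl Hmin.
pose pr := exist (fun l => derivable_pt_abs _ 0 l) l Hl.
have := @deriv_minimum _ (- r) r 0 pr ltac:(lra) r0.
rewrite /derive_pt /pr /= vadd_scale0; apply => t Ht1 Ht2; apply: Hmin.
by rewrite /ball vsub_line norm_scale norm_ebasis; split_Rabs; lra.
Qed.

Lemma local_min_hessian_psd n (psi : Vec n -> R) Dpsi D2psi x r :
  0 < r -> C2_on (ball x r) psi Dpsi D2psi ->
  (forall y, ball x r y -> psi x <= psi y) -> (forall i, Dpsi i x = 0) ->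
  forall v, 0 <= qform (fun i j => D2psi i j x) v.
Proof.
move=> r0 [HD1 [HD2 [_ [Hc1 Hc2]]]] Hmin grad0 v; apply: Rnot_lt_le => HQ.
have Hx := ball_center x r0.
pose H t := sumI (fun i => v i * Dpsi i (vadd x (vscale t v))).
have Nv := norm_ge0 v.
pose rho := r / (norm v + 1).
have rho0 : 0 < rho by apply: Rdiv_lt_0_compat; lra.
have Hin : forall t, Rabs t < rho -> ball x r (vadd x (vscale t v)).
  move=> t Ht; rewrite /ball vsub_line norm_scale.
  have := Rmult_lt_compat_r (norm v + 1) _ _ ltac:(lra) Ht.
  have -> : rho * (norm v + 1) = r by rewrite /rho; field; neq0.
  by have := Rabs_pos t; nra.
have Hphi : forall t, Rabs t < rho ->
    derivable_pt_lim (fun s => psi (vadd x (vscale s v))) t (H t).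
  move=> t Ht; apply: derivable_pt_lim_shift.
  under [fun h => _]functional_extensionality => h do rewrite line_shift.
  have Hy := Hin t Ht.
  apply: (@derivable_pt_lim_dir _ _ _ _ v (r - norm (vsub (vadd x (vscale t v)) x))).
  - by move: Hy; rewrite /ball; lra.
  - by move=> z Hz i; apply: HD1; apply: ball_sub_ball Hz.
  - by move=> i; apply: cont_on_ball_at (Hc1 i) Hy.
have HH : derivable_pt_lim H 0 (qform (fun i j => D2psi i j x) v).
  apply: derivable_pt_lim_sumI => i; apply: derivable_pt_lim_scal.
  apply: (@derivable_pt_lim_dir _ _ _ _ v r) => //.
  - by move=> z Hz j; apply: HD2.
  - move=> j eps e0; have := cont_on_ball_at (Hc2 i j) Hx e0.
    by rewrite norm_self Rminus_0_r.
have H0 : H 0 = 0.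
  rewrite /H vadd_scale0 (@sumI_ext _ _ (fun _ => 0)) ?sumI_0 // => i.
  by rewrite grad0; ring.
have [t [Ht Hlt]] := deriv2_neg_not_min rho0 Hphi H0 HH HQ.
have := Hmin _ (Hin t ltac:(rewrite Rabs_right; lra)).
by rewrite vadd_scale0 in Hlt; lra.
Qed.

Lemma INR_ge3 n : (3 <= n)%nat -> 3 <= INR n.
Proof. by move/leP/le_INR; rewrite /=; lra. Qed.

Lemma uin_pos n alpha Rad (x0 x : Vec n) : 0 < alpha -> 0 < u_in alpha Rad x0 x.
Proof. by move=> a0; apply: Rmult_lt_0_compat => //; apply: exp_pos. Qed.

(* The eigenvalue of -A^{u_in}, the same at every point of every ball. *)
Definition canonical_eig n alpha := 2 * Rpower alpha (- (4 / (INR n - 2))).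

Lemma canonical_eig_pos n alpha : 0 < canonical_eig n alpha.
Proof.
by rewrite /canonical_eig /Rpower; have := exp_pos (- (4 / (INR n - 2)) * ln alpha); lra.
Qed.

Lemma Rpower_crit_exp N U : 2 < N -> 0 < U ->
  Rpower U (- ((N + 2) / (N - 2))) = Rpower U (- (4 / (N - 2))) * / U.
Proof.
move=> N2 U0; have -> : - ((N + 2) / (N - 2)) = - (4 / (N - 2)) + - (1) by field; neq0.
by rewrite Rpower_plus (Rpower_Ropp U 1) Rpower_1.
Qed.

Lemma Rpower_crit_exp2 N U : 2 < N -> 0 < U ->
  Rpower U (- (2 * N / (N - 2))) = Rpower U (- (4 / (N - 2))) * / U * / U.
Proof.
move=> N2 U0; have -> : - (2 * N / (N - 2)) = - (4 / (N - 2)) + - (1) + - (1) by field; neq0.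
by rewrite !Rpower_plus (Rpower_Ropp U 1) Rpower_1.
Qed.

Module CanonicalCalculus.
Import Coquelicot.Coquelicot.

Section Partials.
Variables (n : nat) (alpha Rad : R) (x0 : Vec n).
Hypothesis Rad0 : 0 < Rad.

Definition rad_gap (z : Vec n) := Rad * Rad - norm2 (vsub z x0).

Definition uin_grad (i : 'I_n) (z : Vec n) :=
  (INR n - 2) * u_in alpha Rad x0 z * (z i - x0 i) / rad_gap z.

Definition uin_hess (i j : 'I_n) (z : Vec n) :=
  (INR n - 2) * u_in alpha Rad x0 z *
    (kdelta i j / rad_gap z + INR n * (z i - x0 i) * (z j - x0 j) / (rad_gap z * rad_gap z)).

Lemma rad_gap_pos z : Defs.ball x0 Rad z -> 0 < rad_gap z.
Proof. by move=> Hz; have := norm2_lt_ball Rad0 Hz; rewrite /rad_gap; lra. Qed.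

Lemma norm2_line x j t :
  norm2 (vsub (vadd x (vscale t (ebasis j))) x0) =
  norm2 (vsub x x0) + 2 * t * (x j - x0 j) + t * t.
Proof.
rewrite /norm2 /vsub /vadd /vscale /ebasis.
have E : forall k, (x k + t * kdelta j k - x0 k) * (x k + t * kdelta j k - x0 k) =
   (x k - x0 k) * (x k - x0 k) + kdelta j k * (2 * t * (x k - x0 k)) + kdelta j k * (t * t).
  by move=> k; rewrite /kdelta; case: (j == k); ring.
by rewrite (sumI_ext E) !sumI_add !sumI_kdelta_l; ring.
Qed.

Lemma uin_partial x i : Defs.ball x0 Rad x ->
  derivable_pt_lim (fun t => u_in alpha Rad x0 (vadd x (vscale t (ebasis i)))) 0 (uin_grad i x).
Proof.
move=> /rad_gap_pos; rewrite /rad_gap => W0.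
have -> : (fun t => u_in alpha Rad x0 (vadd x (vscale t (ebasis i)))) =
  (fun t => alpha * exp ((INR n - 2) / 2 *
     ln (Rad / (Rad * Rad - (norm2 (vsub x x0) + 2 * t * (x i - x0 i) + t * t))))).
  by apply: functional_extensionality => t; rewrite /u_in norm2_line.
apply/is_derive_Reals; rewrite /uin_grad /u_in /rad_gap /Rpower.
auto_derive.
  by repeat split; [neq0|apply: Rmult_lt_0_compat => //; apply: Rinv_0_lt_compat; lra].
have -> : Rad * Rad + - (norm2 (vsub x x0) + 2 * 0 * (x i - x0 i) + 0 * 0) =
  Rad * Rad - norm2 (vsub x x0) by ring.
by rewrite /Rdiv; set X := exp _; field; split; neq0.
Qed.

Lemma uin_partial2 x i j : Defs.ball x0 Rad x ->
  derivable_pt_lim (fun t => uin_grad i (vadd x (vscale t (ebasis j)))) 0 (uin_hess i j x).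
Proof.
move=> /rad_gap_pos; rewrite /rad_gap => W0.
have -> : (fun t => uin_grad i (vadd x (vscale t (ebasis j)))) =
  (fun t => (INR n - 2) * (alpha * exp ((INR n - 2) / 2 *
     ln (Rad / (Rad * Rad - (norm2 (vsub x x0) + 2 * t * (x j - x0 j) + t * t))))) *
     (x i + t * kdelta j i - x0 i) /
     (Rad * Rad - (norm2 (vsub x x0) + 2 * t * (x j - x0 j) + t * t))).
  by apply: functional_extensionality => t; rewrite /uin_grad /rad_gap /u_in norm2_line.
apply/is_derive_Reals; rewrite /uin_hess /u_in /rad_gap /Rpower kdelta_sym.
auto_derive.
  by repeat split; [neq0|apply: Rmult_lt_0_compat => //; apply: Rinv_0_lt_compat; lra|neq0].
have -> : Rad * Rad + - (norm2 (vsub x x0) + 2 * 0 * (x j - x0 j) + 0 * 0) =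
  Rad * Rad - norm2 (vsub x x0) by ring.
by rewrite /Rdiv; set X := exp _; field; split; neq0.
Qed.

Lemma conf_hess_uin (x : Vec n) i j : (3 <= n)%nat -> 0 < alpha -> Defs.ball x0 Rad x ->
  neg_mx (conf_hess (u_in alpha Rad x0) uin_grad uin_hess x) i j =
  canonical_eig n alpha * kdelta i j.
Proof.
move=> Hn a0 Hx; have N3 := INR_ge3 Hn; have W0 := rad_gap_pos Hx.
have N2 : 2 < INR n by lra.
set N := INR n in N2 N3 *.
have U0 := uin_pos Rad x0 x a0.
set U := u_in alpha Rad x0 x in U0 *.
set w := rad_gap x in W0 *.
have EP : Rpower U (- (4 / (N - 2))) = Rpower alpha (- (4 / (N - 2))) * (w / Rad) * (w / Rad).
  rewrite /U /u_in -Rpower_mult_distr; [|done|exact: exp_pos].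
  rewrite Rpower_mult.
  have -> : (N - 2) / 2 * - (4 / (N - 2)) = - INR 2 by rewrite /=; field; neq0.
  rewrite (Rpower_Ropp (Rad / w) (INR 2)) Rpower_pow; last by apply: Rdiv_lt_0_compat.
  by rewrite /=; field; split; neq0.
have ES : sumI (fun k => uin_grad k x * uin_grad k x) =
    (N - 2) * (N - 2) * U * U / (w * w) * norm2 (vsub x x0).
  rewrite /norm2 -sumI_scal; apply: sumI_ext => k; rewrite /uin_grad -/N -/U -/w /vsub.
  by field; neq0.
have EA : norm2 (vsub x x0) = Rad * Rad - w by rewrite /w /rad_gap; ring.
rewrite /neg_mx /conf_hess -/N -/U ES (Rpower_crit_exp N2 U0) (Rpower_crit_exp2 N2 U0) EA.
rewrite /uin_hess /uin_grad -/U -/w -/N EP /canonical_eig; set d := kdelta i j.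
by set a' := Rpower alpha _; field; repeat split; neq0.
Qed.

End Partials.

Lemma uin_radius_continuous n alpha Rad (x0 x : Vec n) : 0 < Rad -> Defs.ball x0 Rad x ->
  continuity_pt (fun r => u_in alpha r x0 x) Rad.
Proof.
move=> R0 /(rad_gap_pos R0); rewrite /rad_gap => W0.
set A := norm2 (vsub x x0) in W0 *.
have [l /is_derive_Reals Hl] :
    ex_derive (fun r => alpha * exp ((INR n - 2) / 2 * ln (r / (r * r - A)))) Rad.
  by auto_derive; repeat split; [neq0|apply: Rdiv_lt_0_compat].
exact: derivable_continuous_pt (exist _ l Hl).
Qed.

End CanonicalCalculus.
Import CanonicalCalculus.

Section Continuity.
Variables (n : nat) (U : Vec n -> Prop).
Implicit Types g h : Vec n -> R.

Lemma cont_on_sub V g : cont_on U g -> (forall z, V z -> U z) -> cont_on V g.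
Proof.
move=> H HV x Vx eps e0; have [d [d0 Hd]] := H x (HV x Vx) eps e0.
by exists d; split => // y Vy; apply/Hd/HV.
Qed.

Lemma cont_on_scale g t : cont_on U g -> cont_on U (fun z => t * g z).
Proof.
move=> H x Ux eps e0; have Ht := Rabs_pos t.
have e1 : 0 < eps / (Rabs t + 1) by apply: Rdiv_lt_0_compat; lra.
have [d [d0 Hd]] := H x Ux _ e1.
exists d; split => // y Uy Hy; have := Hd y Uy Hy.
rewrite -Rmult_minus_distr_l Rabs_mult => h.
have -> : eps = (Rabs t + 1) * (eps / (Rabs t + 1)) by field; neq0.
by have := Rabs_pos (g y - g x); nra.
Qed.

Lemma cont_on_minus g h : cont_on U g -> cont_on U h -> cont_on U (fun z => g z - h z).
Proof.
move=> Hg Hh x Ux eps e0.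
have [d1 [d10 Hd1]] := Hg x Ux (eps / 2) ltac:(lra).
have [d2 [d20 Hd2]] := Hh x Ux (eps / 2) ltac:(lra).
exists (Rmin d1 d2); split => [|y Uy Hy]; first exact: Rmin_pos.
have := Hd1 y Uy (Rlt_le_trans _ _ _ Hy (Rmin_l _ _)).
have := Hd2 y Uy (Rlt_le_trans _ _ _ Hy (Rmin_r _ _)).
have := Rabs_triang (g y - g x) (- (h y - h x)); rewrite Rabs_Ropp.
have -> : g y - g x + - (h y - h x) = g y - h y - (g x - h x) by ring.
lra.
Qed.

Lemma cont_on_div g h : cont_on U g -> cont_on U h ->
  (forall z, U z -> 0 < h z) -> cont_on U (fun z => g z / h z).
Proof.
move=> Hg Hh Hpos x Ux eps e0.
have b0 := Hpos x Ux; set b := h x in b0 *.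
have Hgx := Rabs_pos (g x).
pose e2 := eps * (b * b) / (4 * (Rabs (g x) + 1)).
have e20 : 0 < e2 by apply: Rdiv_lt_0_compat; [apply: Rmult_lt_0_compat; nra|lra].
have [d1 [d10 Hd1]] := Hg x Ux (eps * b / 4) ltac:(apply: Rdiv_lt_0_compat; [nra|lra]).
have [d2 [d20 Hd2]] := Hh x Ux (Rmin (b / 2) e2) ltac:(apply: Rmin_pos; lra).
rewrite -/b in Hd1 Hd2.
exists (Rmin d1 d2); split => [|y Uy Hy]; first exact: Rmin_pos.
have G := Hd1 y Uy (Rlt_le_trans _ _ _ Hy (Rmin_l _ _)).
have H := Hd2 y Uy (Rlt_le_trans _ _ _ Hy (Rmin_r _ _)).
have H1 := Rlt_le_trans _ _ _ H (Rmin_l _ _).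
have H2 := Rlt_le_trans _ _ _ H (Rmin_r _ _).
have hy : b / 2 < h y by move: H1; split_Rabs; lra.
have -> : g y / h y - g x / b = ((g y - g x) * b - g x * (h y - b)) / (h y * b).
  by field; split; neq0.
rewrite /Rdiv Rabs_mult Rabs_inv (Rabs_right (h y * b)); last by nra.
have Hnum : Rabs ((g y - g x) * b - g x * (h y - b)) <= eps * b / 4 * b + Rabs (g x) * e2.
  apply: Rle_trans (Rabs_triang _ _) _; rewrite Rabs_Ropp !Rabs_mult (Rabs_right b); last lra.
  apply: Rplus_le_compat; first by apply: Rmult_le_compat_r; lra.
  by apply: Rmult_le_compat_l => //; lra.
have Hq : Rabs (g x) * e2 <= eps * (b * b) / 4.
  have -> : eps * (b * b) / 4 = (Rabs (g x) + 1) * e2 by rewrite /e2; field; neq0.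
  nra.
apply: (Rmult_lt_reg_r (h y * b)); first nra.
rewrite Rmult_assoc Rinv_l ?Rmult_1_r; last neq0.
have : eps * b / 4 * b + eps * (b * b) / 4 = eps * (b * b) / 2 by field.
have hb : b * b / 2 < h y * b by nra.
have : eps * (b * b) / 2 < eps * (h y * b) by have := Rmult_lt_compat_l eps _ _ e0 hb; lra.
nra.
Qed.

End Continuity.

Section C2Functions.
Variables (n : nat) (U : Vec n -> Prop) (g h : Vec n -> R).
Variables (Dg Dh : 'I_n -> Vec n -> R) (D2g D2h : 'I_n -> 'I_n -> Vec n -> R).

Lemma C2_on_sub V : C2_on U g Dg D2g -> (forall z, V z -> U z) -> C2_on V g Dg D2g.
Proof.
move=> [H1 [H2 [H3 [H4 H5]]]] HV; split; [|split; [|split; [|split]]].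
- by move=> x Vx; apply/H1/HV.
- by move=> x Vx; apply/H2/HV.
- exact: cont_on_sub H3 HV.
- by move=> i; apply: cont_on_sub (H4 i) HV.
- by move=> i j; apply: cont_on_sub (H5 i j) HV.
Qed.

Lemma C2_on_scale t : C2_on U g Dg D2g ->
  C2_on U (fun z => t * g z) (fun i z => t * Dg i z) (fun i j z => t * D2g i j z).
Proof.
move=> [H1 [H2 [H3 [H4 H5]]]]; split; [|split; [|split; [|split]]].
- by move=> x Ux i; apply: derivable_pt_lim_scal; apply: H1.
- by move=> x Ux i j; apply: derivable_pt_lim_scal; apply: H2.
- exact: cont_on_scale.
- by move=> i; apply: cont_on_scale.
- by move=> i j; apply: cont_on_scale.
Qed.

Lemma C2_on_minus : C2_on U g Dg D2g -> C2_on U h Dh D2h ->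
  C2_on U (fun z => g z - h z) (fun i z => Dg i z - Dh i z) (fun i j z => D2g i j z - D2h i j z).
Proof.
move=> [G1 [G2 [G3 [G4 G5]]]] [H1 [H2 [H3 [H4 H5]]]]; split; [|split; [|split; [|split]]].
- by move=> x Ux i; apply: derivable_pt_lim_minus; [apply: G1|apply: H1].
- by move=> x Ux i j; apply: derivable_pt_lim_minus; [apply: G2|apply: H2].
- exact: cont_on_minus.
- by move=> i; apply: cont_on_minus.
- by move=> i j; apply: cont_on_minus.
Qed.

End C2Functions.

Lemma eigvals_scalar n (M : 'I_n -> 'I_n -> R) c :
  (forall i j, M i j = c * kdelta i j) -> eigvals M (fun _ => c).
Proof.
move=> HM; exists (fun i j => kdelta i j); split => i j.
  rewrite -(@sumI_kdelta_l _ (fun k => kdelta k j) i).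
  by apply: sumI_ext => k; rewrite kdelta_sym.
rewrite (@sumI_ext _ _ (fun k => kdelta i k * M k j)); first by rewrite sumI_kdelta_l HM; ring.
by move=> k; rewrite (@sumI_kdelta_r _ (fun l => kdelta k i * M k l) j) kdelta_sym.
Qed.

(* v is the i-th column of the orthogonal diagonalizer. *)
Lemma eigvals_scalar_add n (M H : 'I_n -> 'I_n -> R) c mu :
  eigvals M mu -> (forall k l, M k l = c * kdelta k l + H k l) ->
  forall i, exists v : Vec n, mu i = c + qform H v.
Proof.
move=> [Q [HQ1 HQ2]] HM i; exists (fun k => Q k i).
have := HQ2 i i; rewrite kdelta_ii Rmult_1_l => <-.
rewrite /qform -(Rmult_1_r c) -(kdelta_ii i) -HQ1 -sumI_scal -sumI_add.
apply: sumI_ext => k.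
rewrite (@sumI_ext _ _ (fun l => kdelta k l * (c * Q k i * Q l i) + Q k i * (Q l i * H k l))).
  by rewrite sumI_add (@sumI_kdelta_l _ (fun l => c * Q k i * Q l i) k) sumI_scal; ring.
by move=> l; rewrite HM; ring.
Qed.

Lemma qform_scale n (A : 'I_n -> 'I_n -> R) k v : qform (fun i j => k * A i j) v = k * qform A v.
Proof.
rewrite /qform -sumI_scal; apply: sumI_ext => i.
by rewrite (@sumI_ext _ _ (fun j => k * (v j * A i j))) ?sumI_scal; [ring|move=> j; ring].
Qed.

Lemma qform_sub_swap n (A B : 'I_n -> 'I_n -> R) v :
  qform (fun i j => A i j - B i j) v = - qform (fun i j => B i j - A i j) v.
Proof.
have -> : - qform (fun i j => B i j - A i j) v = qform (fun i j => -1 * (B i j - A i j)) v.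
  by rewrite qform_scale; ring.
by rewrite /qform; apply: sumI_ext => i; congr (_ * _); apply: sumI_ext => j; ring.
Qed.

Lemma Rpower_base1 p : Rpower 1 p = 1.
Proof. by rewrite /Rpower ln_1 Rmult_0_r exp_0. Qed.

Lemma Rpower_lt1 a p : 0 < a < 1 -> 0 < p -> Rpower a p < 1.
Proof. by move=> Ha p0; rewrite -(Rpower_base1 p); apply: Rlt_Rpower_l. Qed.

Lemma Rpower_gt1 a p : 1 < a -> 0 < p -> 1 < Rpower a p.
Proof. by move=> Ha p0; rewrite -(Rpower_base1 p); apply: Rlt_Rpower_l; lra. Qed.

Lemma Rpower_inv_exp a p : 0 < a -> 0 < p -> Rpower (Rpower a (/ p)) p = a.
Proof. by move=> a0 p0; rewrite Rpower_mult Rinv_l ?Rpower_1 //; neq0. Qed.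

Lemma Rpower_neg_lt1 t e : 1 < t -> 0 < e -> Rpower t (- e) < 1.
Proof. by move=> t1 e0; rewrite -(Rpower_O t); [apply: Rpower_lt|]; lra. Qed.

Lemma Rpower_neg_gt1 t e : 0 < t < 1 -> 0 < e -> 1 < Rpower t (- e).
Proof.
move=> t01 e0; rewrite Rpower_Ropp -Rinv_1.
by apply: Rinv_lt_contravar; [rewrite Rmult_1_r; apply: exp_pos|apply: Rpower_lt1].
Qed.

Lemma closure_incl n (Gam : Vec n -> Prop) mu : Gam mu -> Defs.closure Gam mu.
Proof. by move=> H eps e0; exists mu; split => //; rewrite norm_self. Qed.

Section StructuralConsequences.
Variables (n : nat) (Gam : Vec n -> Prop) (f : Vec n -> R).
Hypothesis Hs : structural Gam f.

Lemma cone_of_f_eq1 mu : Defs.closure Gam mu -> f mu = 1 -> Gam mu.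
Proof. by move=> Hc Hf; apply: NNPP => H; have := f_bdry Hs Hc H; lra. Qed.

Variable c : R.
Hypotheses (Gc : Gam (fun _ => c)) (fc : f (fun _ => c) = 1) (c0 : 0 < c).


Lemma f_ge1_of_ge_const mu : (forall i, c <= mu i) -> Defs.closure Gam mu /\ 1 <= f mu.
Proof.
move=> Hmu; have [p [p0 Hp]] := f_homog Hs.
(* mu dominates s c for every s < 1, so f mu >= f (s c) = s^p *)
have key : forall s, 0 < s < 1 -> Gam mu /\ Rpower s p <= f mu.
  move=> s [s0 s1].
  have E : mu = vadd (vscale s (fun _ => c)) (fun i => mu i - s * c).
    by apply: functional_extensionality => i; rewrite /vadd /vscale; ring.
  have Hpos : Gamma_n (fun i => mu i - s * c) by move=> i; have := Hmu i; nra.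
  have Hgs := Gam_cone Hs Gc s0.
  split; first by rewrite {1}E; apply: (Gam_add Hs Hgs Hpos).
  have := f_mono Hs Hgs Hpos; rewrite -E Hp // ?fc; first lra.
  exact: closure_incl.
have [Gmu _] := key (1/2) ltac:(lra).
split; first exact: closure_incl.
apply: Rnot_lt_le => Hlt; have fpos := f_pos Hs Gmu.
pose a := (f mu + 1) / 2.
have ip : 0 < / p by apply: Rinv_0_lt_compat.
have a01 : 0 < a < 1 by rewrite /a; lra.
have [_] := key (Rpower a (/ p)) (conj (exp_pos _) (Rpower_lt1 a01 ip)).
by rewrite Rpower_inv_exp /a //; lra.
Qed.

Lemma f_le1_of_le_const mu : (forall i, mu i <= c) -> ~ Defs.closure Gam mu \/ f mu <= 1.
Proof.
move=> Hmu; case: (classic (Defs.closure Gam mu)) => Hc; [right|by left].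
case: (classic (Gam mu)) => Gmu; last by rewrite (f_bdry Hs Hc Gmu); lra.
have [p [p0 Hp]] := f_homog Hs.
apply: Rnot_lt_le => Hlt.
pose a := (f mu + 1) / 2.
have ip : 0 < / p by apply: Rinv_0_lt_compat.
set s := Rpower a (/ p).
have s1 : 1 < s by apply: Rpower_gt1; rewrite /a; lra.
(* s c dominates mu, so f mu <= f (s c) = a < f mu *)
have E : vscale s (fun _ => c) = vadd mu (fun i => s * c - mu i).
  by apply: functional_extensionality => i; rewrite /vadd /vscale; ring.
have Hpos : Gamma_n (fun i => s * c - mu i) by move=> i; have := Hmu i; nra.
have := f_mono Hs Gmu Hpos; rewrite -E Hp; [|exact: closure_incl|lra].
by rewrite fc Rpower_inv_exp // /a; lra.
Qed.

Lemma f_const_scale_lt1 s : 0 < s < 1 -> f (fun _ => s * c) < 1.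
Proof.
move=> [s0 s1]; have [p [p0 Hp]] := f_homog Hs.
rewrite (Hp (fun _ => c) s) ?fc //; last exact: closure_incl.
by have := Rpower_lt1 (conj s0 s1) p0; lra.
Qed.

Lemma f_const_scale_gt1 s : 1 < s -> Gam (fun _ => s * c) /\ 1 < f (fun _ => s * c).
Proof.
move=> s1; have [p [p0 Hp]] := f_homog Hs.
split; first by apply: (Gam_cone Hs Gc); lra.
rewrite (Hp (fun _ => c) s) ?fc; [|exact: closure_incl|lra].
by have := Rpower_gt1 s1 p0; lra.
Qed.

End StructuralConsequences.

Lemma conf_hess_scale n g Dg D2g (x : Vec n) t i j : (3 <= n)%nat -> 0 < t -> 0 < g x ->
  conf_hess (fun z => t * g z) (fun i z => t * Dg i z) (fun i j z => t * D2g i j z) x i j =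
  Rpower t (- (4 / (INR n - 2))) * conf_hess g Dg D2g x i j.
Proof.
move=> Hn t0 g0; have N2 : 2 < INR n by have := INR_ge3 Hn; lra.
have tg : 0 < t * g x by nra.
rewrite /conf_hess /= !(Rpower_crit_exp N2) // !(Rpower_crit_exp2 N2) // -!Rpower_mult_distr //.
rewrite (@sumI_ext _ _ (fun k => (t * t) * (Dg k x * Dg k x))) ?sumI_scal; last by move=> k; ring.
by set a := Rpower t _; set b := Rpower (g x) _; field; repeat split; neq0.
Qed.

Lemma neg_conf_hess_touching n phi Dphi D2phi g Dg D2g (x : Vec n) k l :
  phi x = g x -> (forall i, Dphi i x = Dg i x) ->
  neg_mx (conf_hess phi Dphi D2phi x) k l =
  neg_mx (conf_hess g Dg D2g x) k l +
  (2 / (INR n - 2)) * Rpower (g x) (- ((INR n + 2) / (INR n - 2))) * (D2phi k l x - D2g k l x).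
Proof.
move=> Eg ED; rewrite /neg_mx /conf_hess /= Eg !ED.
rewrite (@sumI_ext _ (fun k => Dphi k x * Dphi k x) (fun k => Dg k x * Dg k x)); first ring.
by move=> i; rewrite ED.
Qed.

Lemma derivable_pt_lim_local f g l : derivable_pt_lim f 0 l ->
  (exists d, 0 < d /\ forall t, Rabs t < d -> g t = f t) -> derivable_pt_lim g 0 l.
Proof.
move=> H [d [d0 Hd]] eps e0; have [d1 Hd1] := H eps e0; have dp := cond_pos d1.
exists (mkposreal _ (Rmin_pos _ _ dp d0)) => h hn /= hd.
rewrite !Hd; first by apply: Hd1 => //; apply: Rlt_le_trans hd (Rmin_l _ _).
  by rewrite Rabs_R0.
by rewrite Rplus_0_l; apply: Rlt_le_trans hd (Rmin_r _ _).
Qed.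

Section CanonicalSolution.
Variables (n : nat) (alpha : R).
Hypotheses (Hn : (3 <= n)%nat) (a0 : 0 < alpha).

(* By uniqueness of derivatives, Du and D2u are the explicit partials of u_in. *)
Lemma neg_conf_hess_uin R1 (y0 : Vec n) Du D2u x : 0 < R1 ->
  C2_on (ball y0 R1) (u_in alpha R1 y0) Du D2u -> ball y0 R1 x ->
  forall i j, neg_mx (conf_hess (u_in alpha R1 y0) Du D2u x) i j =
    canonical_eig n alpha * kdelta i j.
Proof.
move=> R0 [C1 [C2 _]] Hx i j.
have EDu : forall z, ball y0 R1 z -> forall k, Du k z = uin_grad alpha R1 y0 k z.
  by move=> z Hz k; apply: uniqueness_limite (C1 z Hz k) (uin_partial alpha R0 k Hz).
have ED2 : forall k l, D2u k l x = uin_hess alpha R1 y0 k l x.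
  move=> k l; apply: (uniqueness_limite _ _ _ _ (C2 x Hx k l)).
  apply: derivable_pt_lim_local (uin_partial2 alpha R0 k l Hx) _.
  exists (R1 - norm (vsub x y0)); split => [|t Ht]; first by move: Hx; rewrite /ball; lra.
  by apply: EDu; rewrite /ball; have := norm_line x y0 l t; lra.
rewrite -(conf_hess_uin R0 i j Hn a0 Hx) /neg_mx /conf_hess /= !EDu // ED2.
rewrite (@sumI_ext _ _ (fun k => uin_grad alpha R1 y0 k x * uin_grad alpha R1 y0 k x)) //.
by move=> k; rewrite EDu.
Qed.

Lemma eigvals_scaled_uin R1 (y0 : Vec n) Du D2u x t : 0 < R1 ->
  C2_on (ball y0 R1) (u_in alpha R1 y0) Du D2u -> ball y0 R1 x -> 0 < t ->
  eigvals (neg_mx (conf_hess (fun z => t * u_in alpha R1 y0 z) (fun i z => t * Du i z)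
      (fun i j z => t * D2u i j z) x))
    (fun _ => Rpower t (- (4 / (INR n - 2))) * canonical_eig n alpha).
Proof.
move=> R0 HC Hx t0; apply: eigvals_scalar => i j.
rewrite /neg_mx conf_hess_scale //; last exact: uin_pos.
have := neg_conf_hess_uin R0 HC Hx i j; rewrite /neg_mx => h.
by rewrite Ropp_mult_distr_r h; ring.
Qed.

Lemma uin_blows_up R1 (y0 : Vec n) : 0 < R1 -> blows_up_at_bdry y0 R1 (u_in alpha R1 y0).
Proof.
move=> R0 M; have k0 : 0 < (INR n - 2) / 2 by have := INR_ge3 Hn; lra.
pose K := Rmax (M / alpha) 1.
have K0 : 0 < K by rewrite /K; have := Rmax_r (M / alpha) 1; lra.
pose B := Rpower K (/ ((INR n - 2) / 2)).
have B0 : 0 < B := exp_pos _.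
exists (/ (2 * (B + 1))); split => [|x Hx Hd]; first by apply: Rinv_0_lt_compat; lra.
set d := norm (vsub x y0) in Hd.
have d0 : 0 <= d := norm_ge0 _.
have dR : d < R1 by [].
have Ew : R1 * R1 - norm2 (vsub x y0) = (R1 - d) * (R1 + d) by rewrite -norm_sq /d; ring.
(* R1 / (R1^2 - d^2) >= 1 / (2 (R1 - d)) > B + 1 *)
have Hq : B < R1 / (R1 * R1 - norm2 (vsub x y0)).
  rewrite Ew; apply: (Rmult_lt_reg_r ((R1 - d) * (R1 + d))); first nra.
  have -> : R1 / ((R1 - d) * (R1 + d)) * ((R1 - d) * (R1 + d)) = R1 by field; split; neq0.
  have : (R1 - d) * (2 * (B + 1)) < 1.
    have := Rmult_lt_compat_r (2 * (B + 1)) _ _ ltac:(lra) Hd.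
    by rewrite Rinv_l; [lra|neq0].
  nra.
have HK : K < Rpower (R1 / (R1 * R1 - norm2 (vsub x y0))) ((INR n - 2) / 2).
  by rewrite -(Rpower_inv_exp K0 k0); apply: Rlt_Rpower_l.
have := Rmax_l (M / alpha) 1; rewrite -/K /u_in => h.
have : M / alpha * alpha = M by field; neq0.
nra.
Qed.

End CanonicalSolution.

Lemma Rdiv_gt1 a b : 0 < b -> b < a -> 1 < a / b.
Proof.
move=> b0 ba; apply: (Rmult_lt_reg_r b) => //.
by rewrite Rmult_1_l /Rdiv Rmult_assoc Rinv_l ?Rmult_1_r //; neq0.
Qed.

Lemma Rdiv_lt1 a b : 0 < b -> a < b -> a / b < 1.
Proof.
move=> b0 ab; apply: (Rmult_lt_reg_r b) => //.
by rewrite Rmult_1_l /Rdiv Rmult_assoc Rinv_l ?Rmult_1_r //; neq0.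
Qed.

Lemma shell_radius a r d : 0 <= a < r -> 0 < d -> exists rho, a < rho < r /\ r - rho < d.
Proof.
move=> Ha d0; exists (Rmax (r - d / 2) ((a + r) / 2)).
have := Rmax_l (r - d / 2) ((a + r) / 2); have := Rmax_r (r - d / 2) ((a + r) / 2).
by have := Rmax_lub_lt (r - d / 2) ((a + r) / 2) r ltac:(lra) ltac:(lra); lra.
Qed.

Section RatioExtremum.
Variables (n : nat) (u w : Vec n -> R) (x0 y : Vec n) (r rho : R).
Hypotheses (Hu : cont_on (ball x0 r) u) (Hw : cont_on (ball x0 r) w).
Hypothesis Hwpos : forall z, ball x0 r z -> 0 < w z.
Hypothesis Hrho : norm (vsub y x0) < rho < r.

(* The maximum of u / w over the closed ball of radius rho is, by the shell hypothesis,
   a maximum over the whole ball of radius r. *)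
Lemma ratio_max_touch :
  (forall z, ball x0 r z -> rho < norm (vsub z x0) -> u z <= u y / w y * w z) ->
  exists x1 t, ball x0 r x1 /\ u y / w y <= t /\ t * w x1 = u x1 /\
    forall z, ball x1 (r - norm (vsub x1 x0)) z -> u z <= t * w z.
Proof.
move=> Hshell.
have Hin : forall z, norm (vsub z x0) <= rho -> ball x0 r z by rewrite /ball => z; lra.
have Hratio : cont_on (fun z => norm (vsub z x0) <= rho) (fun z => u z / w z).
  by apply: cont_on_div; [apply: cont_on_sub Hu _|apply: cont_on_sub Hw _|move=> z /Hin/Hwpos].
have rho0 : 0 <= rho by have := norm_ge0 (vsub y x0); lra.
have [x1 [Hx1 Hmax]] := cball_argmax rho0 Hratio.
have w1 := Hwpos (Hin x1 Hx1).
have Ht : u y / w y <= u x1 / w x1 by apply: Hmax; lra.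
exists x1, (u x1 / w x1); split; first exact: Hin.
split => //; split; first by field; neq0.
move=> z /(ball_sub_ball (Hin x1 Hx1)) Hz; have wz := Hwpos Hz.
case: (Rle_lt_dec (norm (vsub z x0)) rho) => hz.
  have := Rmult_le_compat_r (w z) _ _ (Rlt_le _ _ wz) (Hmax z hz).
  by rewrite /Rdiv Rmult_assoc Rinv_l ?Rmult_1_r //; neq0.
by have := Hshell z Hz hz; have := Rmult_le_compat_r (w z) _ _ (Rlt_le _ _ wz) Ht; lra.
Qed.

End RatioExtremum.

Lemma ratio_min_touch n (u w : Vec n -> R) (x0 y : Vec n) (r rho : R) :
  cont_on (ball x0 r) u -> cont_on (ball x0 r) w -> (forall z, ball x0 r z -> 0 < w z) ->
  norm (vsub y x0) < rho < r ->
  (forall z, ball x0 r z -> rho < norm (vsub z x0) -> u y / w y * w z <= u z) ->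
  exists x1 t, ball x0 r x1 /\ t <= u y / w y /\ t * w x1 = u x1 /\
    forall z, ball x1 (r - norm (vsub x1 x0)) z -> t * w z <= u z.
Proof.
move=> Hu Hw Hwpos Hrho Hshell.
have Hu' : cont_on (ball x0 r) (fun z => -1 * u z) by apply: cont_on_scale.
have wy : w y <> 0 by apply/Rgt_not_eq/Hwpos; rewrite /ball; lra.
have Eratio : -1 * u y / w y = - (u y / w y) by field.
have [|x1 [t [Hx1 [Ht [Heq Hle]]]]] := ratio_max_touch Hu' Hw Hwpos Hrho.
  by move=> z Hz hz; have := Hshell z Hz hz; rewrite Eratio; lra.
exists x1, (- t); split => //; split; first by move: Ht; rewrite Eratio; lra.
by split; [lra|move=> z /Hle; lra].
Qed.

Lemma continuity_pt_near g a eps : continuity_pt g a -> 0 < eps ->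
  exists d, 0 < d /\ forall r, Rabs (r - a) < d -> Rabs (g r - g a) < eps.
Proof.
move=> Hg e0; have [d [d0 Hd]] := Hg eps e0.
exists d; split => // r Hr; case: (Req_dec a r) => [<-|Har].
  by rewrite Rminus_diag Rabs_R0.
exact: (Hd r (conj (conj I Har) Hr)).
Qed.

Lemma continuity_pt_ge_left g a b c : b < a -> continuity_pt g a ->
  (forall r, b < r < a -> c <= g r) -> c <= g a.
Proof.
move=> ba Hg Hle; apply: Rnot_lt_le => Hlt.
have [d [d0 Hd]] := continuity_pt_near Hg (proj2 (Rlt_0_minus _ _) Hlt).
pose r := a - Rmin d (a - b) / 2.
have := Rmin_l d (a - b); have := Rmin_r d (a - b).
have := Rmin_pos _ _ d0 (proj2 (Rlt_0_minus _ _) ba).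
move=> m0 m1 m2; have := Hle r ltac:(rewrite /r; lra).
by have := Hd r ltac:(rewrite /r Rabs_left; lra); split_Rabs; lra.
Qed.

Lemma continuity_pt_le_right g a c : continuity_pt g a ->
  (forall r, a < r -> g r <= c) -> g a <= c.
Proof.
move=> Hg Hle; apply: Rnot_lt_le => Hlt.
have [d [d0 Hd]] := continuity_pt_near Hg (proj2 (Rlt_0_minus _ _) Hlt).
have := Hle (a + d / 2) ltac:(lra).
by have := Hd (a + d / 2) ltac:(rewrite Rabs_right; lra); split_Rabs; lra.
Qed.

Section Comparison.
Variables (n : nat) (Gam : Vec n -> Prop) (f : Vec n -> R) (alpha : R).
Hypotheses (Hn : (3 <= n)%nat) (Hs : structural Gam f) (a0 : 0 < alpha).
Hypothesis Hcl : forall (R1 : R) (y0 : Vec n), 0 < R1 ->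
  classical_solution Gam f (ball y0 R1) (u_in alpha R1 y0) /\
  classical_solution Gam f (outside_cball y0 R1) (u_out alpha R1 y0).

Let crit_exp_pos : 0 < 4 / (INR n - 2).
Proof. by have := INR_ge3 Hn; move=> h; apply: Rdiv_lt_0_compat; lra. Qed.

Lemma uin_C2 R1 (y0 : Vec n) : 0 < R1 ->
  exists Du D2u, C2_on (ball y0 R1) (u_in alpha R1 y0) Du D2u.
Proof. by move=> R0; have [_ [Du [D2u [HC _]]]] := (Hcl y0 R0).1; exists Du, D2u. Qed.

Lemma canonical_eig_solves :
  Gam (fun _ => canonical_eig n alpha) /\ f (fun _ => canonical_eig n alpha) = 1.
Proof.
pose y0 : Vec n := fun _ => 0.
have [_ [Du [D2u [HC Heig]]]] := (Hcl y0 Rlt_0_1).1.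
have Hy0 := ball_center y0 Rlt_0_1.
have [Hc Hf] := Heig y0 Hy0 _ (eigvals_scalar (neg_conf_hess_uin Hn a0 Rlt_0_1 HC Hy0)).
by split; first exact: (cone_of_f_eq1 Hs Hc Hf).
Qed.

Lemma sub_le_smaller_uin Rad (x0 : Vec n) u r : 0 < r -> r < Rad ->
  cont_on (ball x0 Rad) u -> visc_sub Gam f (ball x0 Rad) u ->
  forall y, ball x0 r y -> u y <= u_in alpha r x0 y.
Proof.
move=> r0 rR Hc Hsub y Hy; apply: Rnot_lt_le => Hlt.
have [Du [D2u HC]] := uin_C2 x0 r0.
have [HG Hf] := canonical_eig_solves.
have inR : forall z, norm (vsub z x0) <= r -> ball x0 Rad z by rewrite /ball => z; lra.
have [xm [_ HM]] := cball_argmax (Rlt_le _ _ r0) (cont_on_sub Hc inR).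
have [d [d0 Hd]] := uin_blows_up Hn a0 x0 r0 (u xm).
have [rho [Hrho Hshell]] := shell_radius (conj (norm_ge0 (vsub y x0)) Hy) d0.
have uy := uin_pos r x0 y a0.
have s1 := Rdiv_gt1 uy Hlt.
have [|x1 [t [Hx1 [Ht [Heq Hle]]]]] :=
  ratio_max_touch (cont_on_sub Hc (fun z => inR z \o Rlt_le _ _))
  HC.2.2.1 (fun z _ => uin_pos r x0 z a0) Hrho.
  move=> z Hz hz; have := Hd z Hz ltac:(lra); have := HM z (Rlt_le _ _ Hz).
  by have := uin_pos r x0 z a0; nra.
have r1 : 0 < r - norm (vsub x1 x0) by move: Hx1; rewrite /ball; lra.
have t1 : 1 < t by lra.
have [_ Hf1] := Hsub x1 _ _ _ _ (inR x1 (Rlt_le _ _ Hx1)) r1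
  (fun z hz => inR z (Rlt_le _ _ (ball_sub_ball Hx1 hz)))
  (C2_on_sub (C2_on_scale t HC) (ball_sub_ball Hx1)) Heq Hle _
  (eigvals_scaled_uin Hn a0 r0 HC Hx1 (Rlt_trans _ _ _ Rlt_0_1 t1)).
have := f_const_scale_lt1 Hs HG Hf (s := Rpower t _)
  (conj (exp_pos _) (Rpower_neg_lt1 t1 crit_exp_pos)).
lra.
Qed.

Lemma super_ge_larger_uin Rad (x0 : Vec n) u R' : 0 < Rad -> Rad < R' ->
  cont_on (ball x0 Rad) u -> visc_super Gam f (ball x0 Rad) u ->
  (forall x, ball x0 Rad x -> 0 < u x) -> blows_up_at_bdry x0 Rad u ->
  forall y, ball x0 Rad y -> u_in alpha R' x0 y <= u y.
Proof.
move=> R0 RR Hc Hsup Hpos Hbu y Hy; apply: Rnot_lt_le => Hlt.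
have R'0 : 0 < R' by lra.
have inR' : forall z, ball x0 Rad z -> ball x0 R' z by rewrite /ball => z; lra.
have [Du [D2u HC]] := uin_C2 x0 R'0.
have [HG Hf] := canonical_eig_solves.
pose K := alpha * Rpower (R' / (R' * R' - Rad * Rad)) ((INR n - 2) / 2).
have HK : forall z, ball x0 Rad z -> u_in alpha R' x0 z <= K.
  move=> z hz; rewrite /u_in /K; apply: Rmult_le_compat_l; first lra.
  have := norm2_lt_ball R0 hz; have := norm2_ge0 (vsub z x0) => h3 h2.
  apply: Rle_Rpower_l; first by have := INR_ge3 Hn; lra.
  split; first by apply: Rdiv_lt_0_compat; nra.
  by apply: Rmult_le_compat_l; [lra|apply: Rinv_le_contravar; nra].
have [d [d0 Hd]] := Hbu K.
have [rho [Hrho Hshell]] := shell_radius (conj (norm_ge0 (vsub y x0)) Hy) d0.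
have uy := uin_pos R' x0 y a0.
have s1 := Rdiv_lt1 uy Hlt.
have [|x1 [t [Hx1 [Ht [Heq Hle]]]]] := ratio_min_touch Hc (cont_on_sub HC.2.2.1 inR')
  (fun z _ => uin_pos R' x0 z a0) Hrho.
  move=> z Hz hz; have := Hd z Hz ltac:(lra); have := HK z Hz.
  by have := Hpos z Hz; have := uin_pos R' x0 z a0; nra.
have r1 : 0 < Rad - norm (vsub x1 x0) by move: Hx1; rewrite /ball; lra.
have t0 : 0 < t.
  have w1 := uin_pos R' x0 x1 a0.
  have -> : t = u x1 / u_in alpha R' x0 x1 by rewrite -Heq; field; neq0.
  exact: Rdiv_lt_0_compat (Hpos x1 Hx1) w1.
have t1 : t < 1 by lra.
have [HGs Hfs] :=
  f_const_scale_gt1 Hs HG Hf (s := Rpower t _) (Rpower_neg_gt1 (conj t0 t1) crit_exp_pos).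
have [] := Hsup x1 _ _ _ _ Hx1 r1 (ball_sub_ball Hx1)
  (C2_on_sub (C2_on_scale t HC) (fun z hz => inR' z (ball_sub_ball Hx1 hz))) Heq Hle _
  (eigvals_scaled_uin Hn a0 R'0 HC (inR' x1 Hx1) t0); last lra.
by apply; apply: closure_incl.
Qed.

Lemma touching_uin_eigvals Rad (x0 x1 : Vec n) phi Dphi D2phi Du D2u mu : 0 < Rad ->
  C2_on (ball x0 Rad) (u_in alpha Rad x0) Du D2u -> ball x0 Rad x1 ->
  phi x1 = u_in alpha Rad x0 x1 -> (forall i, Dphi i x1 = Du i x1) ->
  eigvals (neg_mx (conf_hess phi Dphi D2phi x1)) mu ->
  exists kap, 0 < kap /\ forall i, exists v,
    mu i = canonical_eig n alpha + kap * qform (fun k l => D2phi k l x1 - D2u k l x1) v.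
Proof.
move=> R0 HC Hx1 Heq Hd Heig.
pose kap := 2 / (INR n - 2) * Rpower (u_in alpha Rad x0 x1) (- ((INR n + 2) / (INR n - 2))).
exists kap; split.
  by apply: Rmult_lt_0_compat; [apply: Rdiv_lt_0_compat; have := INR_ge3 Hn; lra|apply: exp_pos].
have Hdec : forall k l, neg_mx (conf_hess phi Dphi D2phi x1) k l =
    canonical_eig n alpha * kdelta k l + kap * (D2phi k l x1 - D2u k l x1).
  move=> k l; rewrite (neg_conf_hess_touching D2phi D2u k l Heq Hd).
  by rewrite (neg_conf_hess_uin Hn a0 R0 HC Hx1).
move=> i; have [v Hv] := eigvals_scalar_add Heig Hdec i.
by exists v; rewrite Hv qform_scale.
Qed.

Lemma uin_visc_solution Rad (x0 : Vec n) : 0 < Rad ->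
  visc_solution Gam f (ball x0 Rad) (u_in alpha Rad x0).
Proof.
move=> R0; have [Du [D2u HC]] := uin_C2 x0 R0.
have [HG Hf] := canonical_eig_solves.
split; first exact: HC.2.2.1.
split => x1 r phi Dphi D2phi Hx1 r0 Hsub HCp Heq Hle mu Heig.
- have HCpsi := C2_on_minus HCp (C2_on_sub HC Hsub).
  have Hmin : forall y, ball x1 r y -> phi x1 - u_in alpha Rad x0 x1 <= phi y - u_in alpha Rad x0 y.
    by move=> y /Hle; rewrite Heq; lra.
  have grad0 : forall i, Dphi i x1 - Du i x1 = 0.
    by move=> i; apply: local_min_partial0 r0 (HCpsi.1 x1 (ball_center x1 r0) i) Hmin.
  have PSD := local_min_hessian_psd r0 HCpsi Hmin grad0.
  have Hd : forall i, Dphi i x1 = Du i x1 by move=> i; have := grad0 i; lra.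
  have [kap [k0 Hmu]] := touching_uin_eigvals R0 HC Hx1 Heq Hd Heig.
  apply: (f_ge1_of_ge_const Hs HG Hf (canonical_eig_pos n alpha)) => i.
  by have [v ->] := Hmu i; have := PSD v; nra.
- have HCpsi := C2_on_minus (C2_on_sub HC Hsub) HCp.
  have Hmin : forall y, ball x1 r y -> u_in alpha Rad x0 x1 - phi x1 <= u_in alpha Rad x0 y - phi y.
    by move=> y /Hle; rewrite Heq; lra.
  have grad0 : forall i, Du i x1 - Dphi i x1 = 0.
    by move=> i; apply: local_min_partial0 r0 (HCpsi.1 x1 (ball_center x1 r0) i) Hmin.
  have PSD := local_min_hessian_psd r0 HCpsi Hmin grad0.
  have Hd : forall i, Dphi i x1 = Du i x1 by move=> i; have := grad0 i; lra.
  have [kap [k0 Hmu]] := touching_uin_eigvals R0 HC Hx1 Heq Hd Heig.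
  apply: (f_le1_of_le_const Hs HG Hf (canonical_eig_pos n alpha)) => i.
  by have [v ->] := Hmu i; rewrite qform_sub_swap; have := PSD v; nra.
Qed.

Lemma sub_le_uin Rad (x0 : Vec n) u : 0 < Rad ->
  cont_on (ball x0 Rad) u -> visc_sub Gam f (ball x0 Rad) u ->
  forall x, ball x0 Rad x -> u x <= u_in alpha Rad x0 x.
Proof.
move=> R0 Hc Hsub x Hx.
have := continuity_pt_ge_left Hx (uin_radius_continuous alpha R0 Hx); apply => r [xr rR].
have r0 : 0 < r by have := norm_ge0 (vsub x x0); lra.
exact: (sub_le_smaller_uin r0 rR Hc Hsub xr).
Qed.

Lemma super_ge_uin Rad (x0 : Vec n) u : 0 < Rad ->
  cont_on (ball x0 Rad) u -> visc_super Gam f (ball x0 Rad) u ->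
  (forall x, ball x0 Rad x -> 0 < u x) -> blows_up_at_bdry x0 Rad u ->
  forall x, ball x0 Rad x -> u_in alpha Rad x0 x <= u x.
Proof.
move=> R0 Hc Hsup Hpos Hbu x Hx.
have := continuity_pt_le_right (uin_radius_continuous alpha R0 Hx); apply => r Rr.
exact: (super_ge_larger_uin R0 Rr Hc Hsup Hpos Hbu Hx).
Qed.

End Comparison.

Unset Implicit Arguments.

Theorem lemma2p3 (n : nat) (Gam : Vec n -> Prop) (f : Vec n -> R)
  (alpha : R) (Rad : R) (x0 : Vec n) :
  (3 <= n)%nat ->
  structural Gam f ->
  (* alpha = alpha(f): the constant making the canonical functions solutions *)
  0 < alpha ->
  (forall (R1 : R) (y0 : Vec n), 0 < R1 ->
     classical_solution Gam f (ball y0 R1) (u_in alpha R1 y0) /\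
     classical_solution Gam f (outside_cball y0 R1) (u_out alpha R1 y0)) ->
  0 < Rad ->
  (visc_solution Gam f (ball x0 Rad) (u_in alpha Rad x0) /\
   (forall x, ball x0 Rad x -> 0 < u_in alpha Rad x0 x) /\
   blows_up_at_bdry x0 Rad (u_in alpha Rad x0)) /\
  (forall u : Vec n -> R,
     visc_solution Gam f (ball x0 Rad) u ->
     (forall x, ball x0 Rad x -> 0 < u x) ->
     blows_up_at_bdry x0 Rad u ->
     forall x, ball x0 Rad x -> u x = u_in alpha Rad x0 x).
Proof.
move=> Hn Hs a0 Hcl R0; split.
  split; first exact: uin_visc_solution.
  by split; [move=> x _; apply: uin_pos|apply: uin_blows_up].
move=> u [Hc [Hsub Hsup]] Hpos Hbu x Hx; apply: Rle_antisym.
- exact: (sub_le_uin Hn Hs a0 Hcl R0 Hc Hsub Hx).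
- exact: (super_ge_uin Hn Hs a0 Hcl R0 Hc Hsup Hpos Hbu Hx).
Qed.
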